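(* Let $\alpha$ and $\theta_\alpha$ be as in the context. For $n\in\mathbb N$ put $\kappa(n):=-n\log2/\log a_n$, and $\kappa_+:=\inf\{\kappa(n):n\in\mathbb N\}$, $\kappa_-:=\sup\{\kappa(n):n\in\mathbb N\}$. Then $\theta_\alpha$ is $\kappa_+$-Hölder continuous and $\kappa_-$-sub-Hölder continuous.
   Context: Let $\mathcal U=[0,1]$. $\alpha=\{A_n:n\in\mathbb N\}$ is a countable partition of $\mathcal U$ (up to the point $0$) into left-open, right-closed intervals of positive length, ordered from right to left starting with $A_1$, accumulating only at $0$; $a_n$ is the length of $A_n$, $t_n:=\sum_{k\ge n}a_k$, $A_n=(t_{n+1},t_n]$. $L_\alpha(x)=(t_n-x)/a_n$ on $A_n$, $L_\alpha(0)=0$. For $x\ne0$, the $\alpha$-Lüroth digits $\ell_k$ are defined by $L_\alpha^{k-1}(x)\in A_{\ell_k}$ (terminating at step $k$ iff $L_\alpha^{k-1}(x)=t_n$ for some $n\ge2$), written $x=[\ell_1,\ell_2,\dots]_\alpha$. The map $\theta_\alpha:\mathcal U\to\mathcal U$ is $\theta_\alpha(0)=0$ and $\theta_\alpha([\ell_1,\ell_2,\dots]_\alpha):=-2\sum_{k\ge1}(-1)^k2^{-\sum_{i=1}^k\ell_i}$. A map $S:\mathcal U\to\mathcal U$ is $\kappa$-Hölder continuous if $|S(x)-S(y)|\le c|x-y|^\kappa$ for some $c>0$ and all $x,y$; for $\kappa\in(0,\infty)$ it is $\kappa$-sub-Hölder continuous if there is $c>0$ with $|S(x)-S(y)|\ge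 c|x-y|^\kappa$ for all $x,y\in\mathcal U$. *)

From HB Require Import structures.
From mathcomp Require Import all_boot all_order all_algebra.
From mathcomp Require Import all_classical all_reals all_analysis.
Set Implicit Arguments. Unset Strict Implicit. Unset Printing Implicit Defensive.
Import Order.TTheory GRing.Theory Num.Theory.
Import numFieldNormedType.Exports.
Local Open Scope classical_set_scope.
Local Open Scope ring_scope.

Section Luroth.
Variable R : realType.
(* a n is the length of A_n, for n >= 1 (a 0 is unused). *)
Variable a : nat -> R.

Definition is_alpha_partition : Prop :=
  (forall n, (1 <= n)%N -> 0 < a n) /\
  ((fun N => \sum_(1 <= k < N) a k) @ \oo --> (1 : R)).

Definition tl (n : nat) : R := \big[+%R/0%R]_(n <= k <oo) a k.

(* the index n >= 1 with y in A_n = (t_{n+1}, t_n] (default 0 if none, e.g. y = 0) *)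
Definition digit (y : R) : nat :=
  xget 0%N [set n | (1 <= n)%N /\ tl n.+1 < y <= tl n].

Definition Lalpha (y : R) : R :=
  if y == 0 then 0 else (tl (digit y) - y) / a (digit y).

(* k-th term (k >= 1) of the series defining theta: zero once the expansion
   has terminated (L^{k-1}(x) = 0), else (-1)^k 2^{-(l_1+...+l_k)} *)
Definition theta_term (x : R) (k : nat) : R :=
  if iter k.-1 Lalpha x == 0 then 0
  else (-1) ^+ k * (2 : R) ^- (\sum_(i < k) digit (iter i Lalpha x))%N.

Definition theta (x : R) : R :=
  if x == 0 then 0 else -2 * \big[+%R/0%R]_(1 <= k <oo) theta_term x k.

Definition kappa (n : nat) : R := - (n%:R * ln (2 : R)) / ln (a n).

Definition kappa_set : set R := [set kappa n | n in [set n : nat | (1 <= n)%N]].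

End Luroth.

Definition holder_cont (R : realType) (kap : R) (S : R -> R) : Prop :=
  exists2 c : R, 0 < c &
    forall x y, 0 <= x <= 1 -> 0 <= y <= 1 -> `|S x - S y| <= c * (`|x - y| `^ kap).

Definition sub_holder_cont (R : realType) (kap : R) (S : R -> R) : Prop :=
  0 < kap /\ exists2 c : R, 0 < c &
    forall x y, 0 <= x <= 1 -> 0 <= y <= 1 -> c * (`|x - y| `^ kap) <= `|S x - S y|.

From HB Require Import structures.
From mathcomp Require Import all_boot all_order all_algebra.
From mathcomp Require Import all_classical all_reals all_analysis.
From mathcomp Require Import ring lra.
Import Order.TTheory GRing.Theory Num.Theory.
Import numFieldNormedType.Exports.
Local Open Scope classical_set_scope.
Local Open Scope ring_scope.

(* The series defining theta gives the self-similarity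
   theta x = 2^-n (2 - theta (L x)) for x in the block A_n, and theta maps
   [0, 1] into [0, 1].  Passing to L x rescales distances by a_n and
   theta-differences by 2^-n, and kappa(n) is exactly the exponent with
   a_n^kappa(n) = 2^-n; so kappa <= kappa(n) for all n gives 2^-n <= a_n^kappa,
   and kappa >= kappa(n) for all n gives the reverse inequality.  Points with
   the same first digit are compared after applying L; points in different
   blocks are compared through the block endpoints t_n, where theta is
   explicit.  Inducting on the number N of common leading digits yields both
   estimates up to an error O(2^-N), which is then let go to zero. *)

Section Luroth.
Variable R : realType.

Lemma le_add3 {u v w : R} : 0 <= u -> 0 <= v -> 0 <= w ->
  [/\ u <= u + v + w, v <= u + v + w & w <= u + v + w].
Proof. by move=> *; split; lra. Qed.

Lemma pow2V_gt0 n : 0 < (2 : R) ^- n.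
Proof. by rewrite invr_gt0 exprn_gt0. Qed.

Lemma pow2V_le {m n} : (m <= n)%N -> (2 : R) ^- n <= 2 ^- m.
Proof.
move=> mn; rewrite -(subnK mn) exprD invfM ler_piMl ?invr_ge0 ?exprn_ge0 //.
by rewrite invf_le1 ?exprn_gt0 // exprn_ege1 // ler1n.
Qed.

Lemma pow2VS m : (2 : R) ^- m.+1 = 2 ^- m / 2.
Proof. by rewrite exprS invfM mulrC. Qed.

Lemma double_pow2VS m : 2 * (2 : R) ^- m.+1 = 2 ^- m.
Proof. by rewrite pow2VS mulrC divfK // pnatr_eq0. Qed.

Lemma pow2V_le_half {n} : (1 <= n)%N -> (2 : R) ^- n <= 2^-1.
Proof. by move/pow2V_le; rewrite expr1. Qed.

Lemma le_add_pow2V (x y c : R) :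
  0 <= c -> (forall N, x <= y + c * 2 ^- N) -> x <= y.
Proof.
move=> c0 hxy; apply/ler_addgt0Pr => e e0.
set N := Num.Def.archi_bound (c / e).
have hN : c / e < N%:R := archi_boundP (divr_ge0 c0 (ltW e0)).
have hN2 : (N%:R : R) < 2 ^+ N by rewrite -natrX ltr_nat ltn_expl.
apply: (le_trans (hxy N)); rewrite lerD2l ler_pdivrMr ?exprn_gt0 //.
rewrite ltr_pdivrMr // in hN.
by have := ler_wpM2r (ltW e0) (ltW hN2); lra.
Qed.

Lemma powRXn (x p : R) n : 0 <= x -> (x ^+ n) `^ p = (x `^ p) ^+ n.
Proof.
move=> x0; rewrite -powR_mulrn // -powRrM mulrC powRrM powR_mulrn //.
exact: powR_ge0.
Qed.

Lemma powR_add3_le {k u v w : R} : 0 <= k -> 0 <= u -> 0 <= v -> 0 <= w ->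
  (u + v + w) `^ k <= 3 `^ k * (u `^ k + v `^ k + w `^ k).
Proof.
move=> k0 u0 v0 w0; set s := u + v + w.
have key z : 0 <= z -> s / 3 <= z -> z `^ k <= u `^ k + v `^ k + w `^ k ->
    s `^ k <= 3 `^ k * (u `^ k + v `^ k + w `^ k).
  move=> z0 sz zk; rewrite -[s](@divfK _ 3) // mulrC powRM ?divr_ge0 ?addr_ge0 //.
  rewrite ler_wpM2l ?powR_ge0 // (le_trans _ zk) // ge0_ler_powR // nnegrE.
  by rewrite divr_ge0 ?addr_ge0.
have := powR_ge0 u k; have := powR_ge0 v k; have := powR_ge0 w k => pw pv pu.
have [su|us] := lerP (s / 3) u; first by apply: (key u) => //; lra.
have [sv|vs] := lerP (s / 3) v; first by apply: (key v) => //; lra.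
apply: (key w) => //; last lra.
have : s / 3 * 3 = s by rewrite divfK.
by rewrite /s in us vs *; lra.
Qed.

Lemma cvg_geometric_half :
  series (geometric (2^-1 : R) (2^-1)) @ \oo --> (1 : R).
Proof.
have := @cvg_geometric_series R (2^-1) (2^-1).
rewrite (_ : 2^-1 / (1 - 2^-1) = 1); last by field.
by apply; rewrite ger0_norm ?invr_ge0 // invf_lt1 // ltr1n.
Qed.

Variable a : nat -> R.
Hypothesis Ha : is_alpha_partition a.

Local Notation L := (Lalpha a).
Local Notation d := (digit a).

Definition psum n := \sum_(1 <= k < n) a k.

Lemma a_gt0 {n} : (1 <= n)%N -> 0 < a n.
Proof. by case: Ha => + _; apply. Qed.

Lemma psum_cvg : psum n @[n --> \oo] --> (1 : R).
Proof. by case: Ha. Qed.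

Lemma psum0 : psum 0 = 0. Proof. by rewrite /psum big_geq. Qed.
Lemma psum1 : psum 1 = 0. Proof. by rewrite /psum big_geq. Qed.

Lemma psumS {n} : (1 <= n)%N -> psum n.+1 = psum n + a n.
Proof. by move=> n1; rewrite /psum big_nat_recr. Qed.

Lemma psum_nondecreasing : nondecreasing_seq psum.
Proof.
apply/nondecreasing_seqP => -[|n]; first by rewrite psum0 psum1.
by rewrite [psum n.+2]psumS // lerDl ltW // a_gt0.
Qed.

Lemma psum_le1 n : psum n <= 1.
Proof.
have := nondecreasing_cvgn_le psum_nondecreasing (cvgP _ psum_cvg) n.
by rewrite (cvg_lim _ psum_cvg).
Qed.

Lemma tail_sum_cvg {n} : (1 <= n)%N ->
  \sum_(n <= k < N) a k @[N --> \oo] --> 1 - psum n.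
Proof.
move=> n1; rewrite -(cvg_shiftn n).
have -> : [sequence \sum_(n <= k < (N + n)%N) a k]_N
    = (fun N => psum (N + n)%N - psum n).
  apply/funext => N /=; rewrite /psum [in RHS](@big_cat_nat _ _ _ n 1) ?leq_addl //=.
  by rewrite addrAC subrr add0r.
by apply: cvgB (cvg_cst _); rewrite (cvg_shiftn n psum); exact: psum_cvg.
Qed.

Lemma tlE {n} : (1 <= n)%N -> tl a n = 1 - psum n.
Proof. by move=> n1; rewrite /tl (cvg_lim _ (tail_sum_cvg n1)). Qed.

Lemma tl1 : tl a 1 = 1.
Proof. by rewrite tlE // psum1 subr0. Qed.

Lemma tlS {n} : (1 <= n)%N -> tl a n.+1 = tl a n - a n.
Proof. by move=> n1; rewrite !tlE ?psumS ?(leq_trans n1) // opprD addrA. Qed.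

Lemma tl_gt0 {n} : (1 <= n)%N -> 0 < tl a n.
Proof.
move=> n1; rewrite tlE // subr_gt0; have := psum_le1 n.+1.
by rewrite psumS //; have := a_gt0 n1; lra.
Qed.

Lemma tl_le {m n} : (1 <= m)%N -> (m <= n)%N -> tl a n <= tl a m.
Proof.
move=> m1 mn; rewrite !tlE ?(leq_trans m1) //.
by have := psum_nondecreasing _ _ mn; lra.
Qed.

Lemma a_le_tl {n} : (1 <= n)%N -> a n <= tl a n.
Proof. by move=> n1; rewrite -subr_ge0 -tlS // ltW // tl_gt0. Qed.

Lemma a_lt1 {n} : (1 <= n)%N -> a n < 1.
Proof.
move=> n1; have := tlS n1; have := tl_gt0 (leqW n1); have := tl_le (leqnn 1) n1.
by rewrite tl1; lra.
Qed.

Definition in_block n y := (1 <= n)%N /\ tl a n.+1 < y <= tl a n.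

Lemma in_block_uniq {n m y} : in_block n y -> in_block m y -> n = m.
Proof.
wlog nm : n m / (n <= m)%N.
  move=> H hn hm; case: (leqP n m) => [|/ltnW] nm; first exact: H.
  by apply/esym/H.
move=> [n1 /andP[hn _]] [m1 /andP[_ hm]].
case: (ltngtP n m) nm => // nm _.
by exfalso; have := tl_le (ltn0Sn n) nm; lra.
Qed.

Lemma in_block_exists y : 0 < y <= 1 -> exists n, in_block n y.
Proof.
move=> /andP[y0 y1].
have [N _ hN] : \forall n \near \oo, 1 - y / 2 <= psum n.
  apply: (lt_lim psum_nondecreasing (cvgP _ psum_cvg)).
  by rewrite (cvg_lim _ psum_cvg) // ltrBlDr ltrDl divr_gt0.
have hm : exists m, 1 - psum m < y by exists N; have := hN N (leqnn N); lra.
case: (ex_minnP hm) => -[|[|m]] hm' hmin; rewrite ?psum0 ?psum1 in hm'; try lra.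
exists m.+1; split => //; rewrite !tlE // hm' /= leNgt.
by apply/negP => /hmin; rewrite ltnn.
Qed.

Lemma digitP {y} : 0 < y <= 1 -> in_block (d y) y.
Proof.
move=> /in_block_exists[n hn].
suff -> : d y = n by [].
by apply: xget_unique => // m hm; exact: in_block_uniq hm hn.
Qed.

Lemma digit_ge1 {x} : 0 < x <= 1 -> (1 <= d x)%N.
Proof. by case/digitP. Qed.

Lemma digit_antitone {x y} : 0 < x <= 1 -> 0 < y <= 1 -> x <= y -> (d y <= d x)%N.
Proof.
move=> /digitP[_ /andP[hx _]] /digitP[_ /andP[_ hy]] xy.
rewrite leqNgt; apply/negP => lt_dx_dy.
have := tl_le (ltn0Sn (d x)) lt_dx_dy.
by move/(le_trans hy)/(le_trans xy)/(lt_le_trans hx); rewrite ltxx.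
Qed.

Lemma LalphaE {y} : 0 < y <= 1 -> L y = (tl a (d y) - y) / a (d y).
Proof. by move=> /andP[y0 _]; rewrite /Lalpha gt_eqF. Qed.

Lemma Lalpha0 : L 0 = 0.
Proof. by rewrite /Lalpha eqxx. Qed.

Lemma LalphaM {x} : 0 < x <= 1 -> L x * a (d x) = tl a (d x) - x.
Proof.
move=> hx; rewrite LalphaE // divfK // gt_eqF // a_gt0 //.
exact: digit_ge1.
Qed.

Lemma Lalpha_in01 {x} : 0 < x <= 1 -> 0 <= L x <= 1.
Proof.
move=> hx; have [d1 /andP[lo hi]] := digitP hx; have an := a_gt0 d1.
rewrite LalphaE // divr_ge0 ?subr_ge0 ?(ltW an) //=.
by rewrite ler_pdivrMr // mul1r lerBlDr -lerBlDl -tlS // ltW.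
Qed.

Lemma gt0_in01 {x : R} : 0 <= x <= 1 -> x != 0 -> 0 < x <= 1.
Proof. by case/andP=> x0 -> x_neq0; rewrite andbT lt_def x_neq0. Qed.

Lemma iter_Lalpha_in01 y k : 0 <= y <= 1 -> 0 <= iter k L y <= 1.
Proof.
move=> hy; elim: k => [|k IH] //=.
have [->|Lk0] := eqVneq (iter k L y) 0; first by rewrite Lalpha0 lexx ler01.
exact/Lalpha_in01/gt0_in01.
Qed.

Lemma iter_Lalpha0 k : iter k L 0 = 0.
Proof. by elim: k => [|k IH] //=; rewrite IH Lalpha0. Qed.

Lemma theta_term_le y k : 0 <= y <= 1 -> `|theta_term a y k| <= 2 ^- k.
Proof.
move=> hy; rewrite /theta_term; case: eqP => [_|Lk0].
  by rewrite normr0; exact/ltW/pow2V_gt0.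
rewrite normrM normrX normrN1 expr1n mul1r ger0_norm; last exact/ltW/pow2V_gt0.
apply: pow2V_le; rewrite -[X in (X <= _)%N]card_ord -sum1_card.
apply: leq_sum => i _; apply: digit_ge1; apply: gt0_in01; first exact: iter_Lalpha_in01.
apply: contra_notN Lk0 => /eqP Li0.
have ik : (i <= k.-1)%N by rewrite -ltnS (ltn_predK (ltn_ord i)).
by rewrite -(subnK ik) iterD Li0 iter_Lalpha0.
Qed.

Lemma theta_term0 k : theta_term a 0 k = 0.
Proof. by rewrite /theta_term iter_Lalpha0 eqxx. Qed.

Lemma theta_term1 x : x != 0 -> theta_term a x 1 = - 2 ^- (d x).
Proof. by move=> x0; rewrite /theta_term /= (negbTE x0) big_ord1 /= expr1 mulN1r. Qed.

Lemma theta_termSS x k :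
  theta_term a x k.+2 = - 2 ^- (d x) * theta_term a (L x) k.+1.
Proof.
rewrite /theta_term /= -iterSr; case: eqP => _; first by rewrite mulr0.
rewrite big_ord_recl /=.
under eq_bigr => i _ do rewrite add0n -iterS iterSr.
by rewrite exprD invfM exprS; ring.
Qed.

Definition theta_sum y := limn (series (fun k => theta_term a y k.+1)).

Lemma normed_theta_series_cvg {y} : 0 <= y <= 1 ->
  cvgn [normed series (fun k => theta_term a y k.+1)].
Proof.
move=> hy; apply: (series_le_cvg _ _ _ (cvgP _ cvg_geometric_half)) => n //=.
by rewrite -exprS exprVn; exact: theta_term_le.
Qed.

Lemma theta_sum_le1 {y} : 0 <= y <= 1 -> `|theta_sum y| <= 1.
Proof.
move=> hy; apply: le_trans (lim_series_norm (normed_theta_series_cvg hy)) _.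
rewrite -(cvg_lim _ cvg_geometric_half) //.
apply: lim_series_le (normed_theta_series_cvg hy) (cvgP _ cvg_geometric_half) _ => n.
by rewrite /geometric /= -exprS exprVn; exact: theta_term_le.
Qed.

Lemma theta_series_cvg {y} : 0 <= y <= 1 ->
  (fun N => \sum_(1 <= k < N) theta_term a y k) @ \oo --> theta_sum y.
Proof.
move=> hy; rewrite -cvg_shiftS.
have -> : [sequence \sum_(1 <= k < n.+1) theta_term a y k]_n
    = series (fun k => theta_term a y k.+1).
  by apply/funext => n /=; rewrite big_add1 /= seriesEnat.
exact/normed_cvg/normed_theta_series_cvg.
Qed.

Lemma theta0 : theta a 0 = 0.
Proof. by rewrite /theta eqxx. Qed.

Lemma thetaE {y} : 0 <= y <= 1 -> theta a y = -2 * theta_sum y.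
Proof.
move=> hy; rewrite /theta; case: eqP => [->|_].
  rewrite /theta_sum (_ : series _ = cst 0) ?lim_cst ?mulr0 //.
  by apply/funext => n; rewrite seriesEnat; apply: big1 => i _; exact: theta_term0.
by rewrite (cvg_lim _ (theta_series_cvg hy)).
Qed.

Lemma theta_in_pm2 {y} : 0 <= y <= 1 -> -2 <= theta a y <= 2.
Proof. by move=> hy; rewrite thetaE //; have := theta_sum_le1 hy; rewrite ler_norml; lra. Qed.

Lemma theta_rec {x} : 0 < x <= 1 -> theta a x = 2 ^- (d x) * (2 - theta a (L x)).
Proof.
move=> hx; have hx01 : 0 <= x <= 1 by case/andP: hx => /ltW -> ->.
have hL := Lalpha_in01 hx.
suff srec : theta_sum x = - 2 ^- (d x) * (1 + theta_sum (L x)).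
  by rewrite !thetaE // srec; ring.
apply: cvg_lim => //; rewrite -cvg_shiftS.
have -> : [sequence series (fun k => theta_term a x k.+1) n.+1]_n =
    (fun n => - 2 ^- (d x) * (1 + series (fun k => theta_term a (L x) k.+1) n)).
  apply/funext => n /=; rewrite !seriesEnat /= big_nat_recl //.
  rewrite theta_term1 ?gt_eqF //; last by case/andP: hx.
  rewrite mulrDr mulr1 big_distrr /=; congr (_ + _).
  by apply: eq_bigr => i _; rewrite theta_termSS.
apply: cvgMl_tmp; apply: cvgD (cvg_cst _) _.
exact/normed_cvg/normed_theta_series_cvg.
Qed.

Lemma theta_in01 {y} : 0 <= y <= 1 -> 0 <= theta a y <= 1.
Proof.
(* Iterating the recursion pushes the a priori bound [|theta| <= 2] to [0, 1]. *)
suff approx N z : 0 <= z <= 1 -> - (2 * 2 ^- N) <= theta a z <= 1 + 2 * 2 ^- N.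
  by move=> hy; apply/andP; split; apply: (@le_add_pow2V _ _ 2) => // N;
    have /andP := approx N y hy; lra.
elim: N z => [|N IH] z hz.
  by rewrite expr0 invr1 mulr1; have /andP := theta_in_pm2 hz; lra.
have [->|z0] := eqVneq z 0.
  by rewrite theta0; apply/andP; split; have := pow2V_gt0 N.+1; lra.
have hz' := gt0_in01 hz z0; rewrite theta_rec // pow2VS.
have /andP[q1 q2] := IH _ (Lalpha_in01 hz').
have p0 := pow2V_gt0 (d z); have p1 := pow2V_le_half (digit_ge1 hz').
have e0 := pow2V_gt0 N.
move: (2 ^- (d z)) (2 ^- N) (theta a (L z)) p0 p1 e0 q1 q2 => p e q p0 p1 e0 q1 q2.
have h1 : 0 <= p * (1 + 2 * e - q) by rewrite mulr_ge0 //; lra.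
have h2 : 0 <= 2 * e * (2^-1 - p) by rewrite !mulr_ge0 //; lra.
have h3 : 0 <= (2 + 2 * e) * (2^-1 - p) by rewrite mulr_ge0 //; lra.
have h4 : 0 <= p * (q + 2 * e) by rewrite mulr_ge0 //; lra.
have hh : (2 : R)^-1 * 2 = 1 by rewrite mulVf.
by apply/andP; split; nra.
Qed.

(* [2 * 2^-n] is the value of theta at the right end [t_n] of the block [A_n],
   and [2^-n] its limit at the left end. *)
Lemma theta_block_top {x} : 0 < x <= 1 ->
  2 * 2 ^- (d x) - theta a x = 2 ^- (d x) * theta a (L x).
Proof. by move=> hx; rewrite theta_rec //; ring. Qed.

Lemma theta_block_bottom {x} : 0 < x <= 1 ->
  theta a x - 2 ^- (d x) = 2 ^- (d x) * (1 - theta a (L x)).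
Proof. by move=> hx; rewrite theta_rec //; ring. Qed.

Lemma block_bottom_dist {x} : 0 < x <= 1 -> x - tl a (d x).+1 = (1 - L x) * a (d x).
Proof. by move=> hx; rewrite mulrBl mul1r (LalphaM hx) (tlS (digit_ge1 hx)); ring. Qed.

Lemma theta_dist_same_digit {x y} : 0 < x <= 1 -> 0 < y <= 1 -> d x = d y ->
  `|theta a x - theta a y| = 2 ^- (d x) * `|theta a (L x) - theta a (L y)|.
Proof.
move=> hx hy dxy; rewrite (theta_rec hx) (theta_rec hy) -dxy -mulrBr normrM.
by rewrite gtr0_norm ?pow2V_gt0 // distrC; congr (_ * `|_|); ring.
Qed.

Lemma dist_same_digit {x y} : 0 < x <= 1 -> 0 < y <= 1 -> d x = d y ->
  `|x - y| = `|L x - L y| * a (d x).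
Proof.
move=> hx hy dxy; have -> : x - y = (L y - L x) * a (d x).
  by rewrite mulrBl (LalphaM hx) dxy (LalphaM hy); ring.
by rewrite normrM distrC gtr0_norm // a_gt0 // digit_ge1.
Qed.

Lemma theta_dist_lt_digit {x y} : 0 < x <= 1 -> 0 < y <= 1 -> (d y < d x)%N ->
  `|theta a x - theta a y| = (theta a y - 2 ^- (d y))
    + (2 ^- (d y) - 2 * 2 ^- (d x)) + (2 * 2 ^- (d x) - theta a x).
Proof.
move=> hx hy dyx.
have -> : theta a x - theta a y = - ((theta a y - 2 ^- (d y))
    + (2 ^- (d y) - 2 * 2 ^- (d x)) + (2 * 2 ^- (d x) - theta a x)) by ring.
rewrite normrN ger0_norm //; apply: addr_ge0; first apply: addr_ge0.
- rewrite (theta_block_bottom hy) mulr_ge0 ?subr_ge0 ?(ltW (pow2V_gt0 _)) //.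
  by case/andP: (theta_in01 (Lalpha_in01 hy)).
- by rewrite subr_ge0 mulrC -ler_pdivlMr // -pow2VS pow2V_le.
- by rewrite (theta_block_top hx) mulr_ge0 ?(ltW (pow2V_gt0 _)) //;
    case/andP: (theta_in01 (Lalpha_in01 hx)).
Qed.

Lemma block_gaps_ge0 {x y} : 0 < x <= 1 -> 0 < y <= 1 -> (d y < d x)%N ->
  [/\ 0 <= y - tl a (d y).+1, 0 <= tl a (d y).+1 - tl a (d x) & 0 <= tl a (d x) - x].
Proof.
move=> /digitP[_ /andP[_ hx]] /digitP[_ /andP[hy _]] dyx.
by rewrite !subr_ge0 hx (ltW hy) tl_le.
Qed.

Lemma dist_lt_digit {x y} : 0 < x <= 1 -> 0 < y <= 1 -> (d y < d x)%N ->
  `|x - y| = (y - tl a (d y).+1) + (tl a (d y).+1 - tl a (d x)) + (tl a (d x) - x).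
Proof.
move=> hx hy dyx; have [g1 g2 g3] := block_gaps_ge0 hx hy dyx.
have -> : x - y = - ((y - tl a (d y).+1) + (tl a (d y).+1 - tl a (d x)) + (tl a (d x) - x)).
  by ring.
by rewrite normrN; apply: ger0_norm; exact: addr_ge0 (addr_ge0 g1 g2) g3.
Qed.

Lemma powR_kappa {n} : (1 <= n)%N -> a n `^ kappa a n = 2 ^- n.
Proof.
move=> n1; have lna : ln (a n) != 0 by rewrite lt_eqF // ln_lt0 // a_gt0 // a_lt1.
rewrite /powR gt_eqF ?a_gt0 // /kappa mulrAC mulfK //.
by rewrite expRN expRM_natl lnK // posrE.
Qed.

Lemma pow2V_le_powR {n} (k : R) : (1 <= n)%N -> k <= kappa a n -> 2 ^- n <= a n `^ k.
Proof.
by move=> n1 k_le; rewrite -powR_kappa // ger_powR // a_gt0 //= ltW // a_lt1.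
Qed.

Lemma powR_le_pow2V {n} (k : R) : (1 <= n)%N -> kappa a n <= k -> a n `^ k <= 2 ^- n.
Proof.
by move=> n1 k_ge; rewrite -powR_kappa // ger_powR // a_gt0 //= ltW // a_lt1.
Qed.

Lemma kappa_gt0 {n} : (1 <= n)%N -> 0 < kappa a n.
Proof.
move=> n1; rewrite /kappa nmulr_rgt0; first by rewrite invr_lt0 ln_lt0 // a_gt0 // a_lt1.
by rewrite oppr_lt0 mulr_gt0 ?ltr0n // ln_gt0 // ltr1n.
Qed.

Lemma kappa_set_lbound : lbound (kappa_set a) 0.
Proof. by move=> _ [n n1 <-]; exact: ltW (kappa_gt0 n1). Qed.

Lemma inf_kappa_ge0 : 0 <= inf (kappa_set a).
Proof. by apply: lb_le_inf kappa_set_lbound; exists (kappa a 1), 1%N. Qed.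

Lemma inf_kappa_le {n} : (1 <= n)%N -> inf (kappa_set a) <= kappa a n.
Proof. by move=> n1; apply: ge_inf; [exists 0; exact: kappa_set_lbound | exists n]. Qed.

Lemma kappa_le_sup {n} : has_ubound (kappa_set a) -> (1 <= n)%N ->
  kappa a n <= sup (kappa_set a).
Proof. by move=> ub n1; apply: ub_le_sup => //; exists n. Qed.

Lemma sup_kappa_gt0 : has_ubound (kappa_set a) -> 0 < sup (kappa_set a).
Proof. by move=> ub; apply: lt_le_trans (kappa_gt0 (leqnn 1)) (kappa_le_sup ub (leqnn 1)). Qed.

Section Holder.
Variable k : R.
Hypothesis k_ge0 : 0 <= k.
Hypothesis pow2V_le_powRk : forall {n}, (1 <= n)%N -> 2 ^- n <= a n `^ k.

Let powRk_le {u v} : 0 <= u -> u <= v -> u `^ k <= v `^ k.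
Proof. by move=> u0 uv; rewrite ge0_ler_powR // nnegrE // (le_trans u0). Qed.

Lemma theta_le_powR {u} : 0 <= u <= 1 -> theta a u <= 4 * u `^ k.
Proof.
move=> hu; have [->|u0] := eqVneq u 0; first by rewrite theta0 mulr_ge0 ?powR_ge0.
have hu' := gt0_in01 hu u0; have [_ /andP[lo _]] := digitP hu'.
have top : theta a u <= 2 * 2 ^- (d u).
  rewrite -subr_ge0 (theta_block_top hu') mulr_ge0 ?(ltW (pow2V_gt0 _)) //.
  by case/andP: (theta_in01 (Lalpha_in01 hu')).
apply: (le_trans top); rewrite -(double_pow2VS (d u)) mulrA -natrM ler_wpM2l //.
apply: le_trans (pow2V_le_powRk (ltn0Sn _)) (powRk_le (ltW (a_gt0 (ltn0Sn _))) _).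
exact: le_trans (a_le_tl (ltn0Sn _)) (ltW lo).
Qed.

Lemma theta_block_top_le {x} : 0 < x <= 1 ->
  2 * 2 ^- (d x) - theta a x <= 4 * (tl a (d x) - x) `^ k.
Proof.
move=> hx; have hL := Lalpha_in01 hx; have /andP[L0 _] := hL.
rewrite (theta_block_top hx) -(LalphaM hx) powRM ?(ltW (a_gt0 (digit_ge1 hx))) //.
rewrite [_ * a _ `^ k]mulrC mulrCA; apply: ler_pM; last exact: theta_le_powR.
- exact/ltW/pow2V_gt0.
- by case/andP: (theta_in01 hL).
- exact/pow2V_le_powRk/digit_ge1.
Qed.

Lemma one_sub_theta_le_powR {v} : 0 <= v <= 1 -> 1 - theta a v <= 4 * (1 - v) `^ k.
Proof.
move=> hv; have [->|v0] := eqVneq v 0; first by rewrite theta0 subr0 powR1 mulr1 ler1n.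
have hv' := gt0_in01 hv v0; have [dv1 /andP[_ hi]] := digitP hv'.
case: (ltngtP (d v) 1) => [|dv2|dv_eq1].
- by rewrite ltnS leqn0 => /eqP dv0; rewrite dv0 in dv1.
- have a1_le : a 1 <= 1 - v.
    have := tl_le (isT : (0 < 2)%N) dv2; rewrite tlS // tl1.
    by move: (tl a (d v)) hi => t ? ?; lra.
  apply: le_trans (ler_wpM2l _ (powRk_le (ltW (a_gt0 (leqnn 1))) a1_le)) => //.
  have := pow2V_le_powRk (leqnn 1); have /andP[t0 _] := theta_in01 hv.
  by rewrite expr1; move: (theta a v) (a 1 `^ k) t0 => ? ? ? ?; lra.
- by have := theta_block_top_le hv'; rewrite dv_eq1 tl1 expr1 divff.
Qed.

Lemma theta_block_bottom_le {x} : 0 < x <= 1 ->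
  theta a x - 2 ^- (d x) <= 4 * (x - tl a (d x).+1) `^ k.
Proof.
move=> hx; have hL := Lalpha_in01 hx; have /andP[_ L1] := hL.
rewrite (theta_block_bottom hx) (block_bottom_dist hx).
rewrite powRM ?subr_ge0 ?(ltW (a_gt0 (digit_ge1 hx))) //.
rewrite [_ * a _ `^ k]mulrC mulrCA; apply: ler_pM; last exact: one_sub_theta_le_powR.
- exact/ltW/pow2V_gt0.
- by case/andP: (theta_in01 hL) => _; rewrite subr_ge0.
- exact/pow2V_le_powRk/digit_ge1.
Qed.

Lemma pow2V_sub_le_tl_sub {m n} : (1 <= m)%N -> (m < n)%N ->
  2 ^- m - 2 * 2 ^- n <= 2 * (tl a m.+1 - tl a n) `^ k.
Proof.
move=> m1; rewrite leq_eqVlt => /orP[/eqP <-|mn].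
  by rewrite double_pow2VS subrr mulr_ge0 ?powR_ge0.
apply: (@le_trans _ _ (2 ^- m)); first by rewrite gerBl mulr_ge0 ?(ltW (pow2V_gt0 _)).
rewrite -double_pow2VS ler_wpM2l //.
apply: le_trans (pow2V_le_powRk (ltn0Sn _)) (powRk_le (ltW (a_gt0 (ltn0Sn _))) _).
by rewrite lerBrDl -lerBrDr -tlS // tl_le.
Qed.

Lemma theta_dist_le_lt_digit {x y} : 0 < x <= 1 -> 0 < y <= 1 -> (d y < d x)%N ->
  `|theta a x - theta a y| <= 10 * `|x - y| `^ k.
Proof.
move=> hx hy dyx; have [g1 g2 g3] := block_gaps_ge0 hx hy dyx.
have [le1 le2 le3] := le_add3 g1 g2 g3.
have dist := dist_lt_digit hx hy dyx.
rewrite (theta_dist_lt_digit hx hy dyx).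
apply: le_trans (lerD (lerD (theta_block_bottom_le hy)
  (pow2V_sub_le_tl_sub (digit_ge1 hy) dyx)) (theta_block_top_le hx)) _.
have := powRk_le g1 le1; have := powRk_le g2 le2; have := powRk_le g3 le3.
rewrite -dist; move: (_ `^ k) (_ `^ k) (_ `^ k) (`|x - y| `^ k) => *; lra.
Qed.

(* Induction on [N]: points with different first digits satisfy the bound
   outright, and points with a common first digit reduce to their images under
   [L] while the error term is halved. *)
Lemma theta_dist_le_approx N x y : 0 <= x <= 1 -> 0 <= y <= 1 ->
  `|theta a x - theta a y| <= 10 * `|x - y| `^ k + 2 * 2 ^- N.
Proof.
elim: N x y => [|N IH] x y hx hy.
  have /andP[tx0 tx1] := theta_in01 hx; have /andP[ty0 ty1] := theta_in01 hy.
  have := powR_ge0 `|x - y| k; rewrite expr0 invr1 mulr1 ler_norml.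
  by move: (theta a x) (theta a y) (_ `^ k) tx0 tx1 ty0 ty1 => *; apply/andP; split; lra.
wlog xy : x y hx hy / x <= y.
  move=> H; case: (leP x y) => [|/ltW] xy; first exact: H.
  by rewrite distrC (distrC x); exact: H.
have e0 := pow2V_gt0 N; rewrite double_pow2VS.
have [->|x0] := eqVneq x 0.
  have /andP[y0 _] := hy; have /andP[ty0 _] := theta_in01 hy.
  rewrite theta0 !sub0r !normrN ger0_norm // ger0_norm //.
  have := theta_le_powR hy; have := powR_ge0 y k.
  by move: (theta a y) (y `^ k) => *; lra.
have hx' := gt0_in01 hx x0.
have hy' : 0 < y <= 1 by case/andP: hy => _ ->; rewrite (lt_le_trans _ xy) //; case/andP: hx'.
have := digit_antitone hx' hy' xy; rewrite leq_eqVlt => /orP[/eqP dyx|dyx]; last first.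
  by apply: le_trans (theta_dist_le_lt_digit hx' hy' dyx) _; rewrite lerDl ltW.
rewrite (theta_dist_same_digit hx' hy' (esym dyx)) (dist_same_digit hx' hy' (esym dyx)).
rewrite powRM ?normr_ge0 ?(ltW (a_gt0 (digit_ge1 hx'))) //.
have := IH _ _ (Lalpha_in01 hx') (Lalpha_in01 hy').
have := pow2V_le_powRk (digit_ge1 hx'); have := pow2V_le_half (digit_ge1 hx').
have := powR_ge0 `|L x - L y| k; have := pow2V_gt0 (d x).
move: (2 ^- d x) (2 ^- N) (a (d x) `^ k) (`|L x - L y| `^ k) e0.
move: (`|theta a (L x) - _|) => T p e A W e0 p0 W0 p_half pA IHT.
have q1 : 0 <= p * (10 * W + 2 * e - T) by apply: mulr_ge0; [exact: ltW | rewrite subr_ge0].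
have q2 : 0 <= W * (A - p) by apply: mulr_ge0; rewrite // subr_ge0.
have q3 : 0 <= e * (2^-1 - p) by apply: mulr_ge0; [exact: ltW | rewrite subr_ge0].
have hh : (2 : R)^-1 * 2 = 1 by rewrite mulVf.
by lra.
Qed.

Lemma theta_holder : holder_cont k (theta a).
Proof.
exists 10 => // x y hx hy; apply: (@le_add_pow2V _ _ 2) => // N.
exact: theta_dist_le_approx.
Qed.

End Holder.

Section SubHolder.
Variable k : R.
Hypothesis k_gt0 : 0 < k.
Hypothesis powRk_le_pow2V : forall {n}, (1 <= n)%N -> a n `^ k <= 2 ^- n.

Let powRk_le {u v} : 0 <= u -> u <= v -> u `^ k <= v `^ k.
Proof. by move=> u0 uv; rewrite ge0_ler_powR ?(ltW k_gt0) // nnegrE // (le_trans u0). Qed.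

Let powRk0 : 0 `^ k = 0.
Proof. by rewrite powR0 // gt_eqF. Qed.

(* [a_n^k <= 2^-n] means [a_n <= r^n] with [r^k = 1/2], so [t_n <= r^n / (1 - r)]
   and [t_n^k <= K 2^-n]; the summand 2 in [K] only ensures [K >= 2]. *)
Let r := (2^-1 : R) `^ k^-1.

Let r_gt0 : 0 < r.
Proof. by rewrite powR_gt0 // invr_gt0. Qed.

Let r_lt1 : r < 1.
Proof.
have ln_half : ln (2^-1 : R) < 0.
  apply: ln_lt0; apply/andP; split; first by rewrite invr_gt0.
  by rewrite invf_lt1 // ltr1n.
rewrite /r /powR gt_eqF ?invr_gt0 // -[X in _ < X]expR0 ltr_expR.
by rewrite pmulr_rlt0 // invr_gt0.
Qed.

Let powRk_r : r `^ k = 2^-1.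
Proof. by rewrite -powRrM mulVf ?gt_eqF // powRr1 // invr_ge0. Qed.

Let a_le_rX n : (1 <= n)%N -> a n <= r ^+ n.
Proof.
move=> n1; have -> : a n = (a n `^ k) `^ k^-1.
  by rewrite -powRrM divff ?gt_eqF // powRr1 // ltW // a_gt0.
rewrite /r -powRXn ?invr_ge0 // exprVn.
apply: ge0_ler_powR; first by rewrite invr_ge0 ltW.
- by rewrite nnegrE powR_ge0.
- by rewrite nnegrE invr_ge0 exprn_ge0.
- exact: powRk_le_pow2V.
Qed.

Let tl_le_geometric {j} : (1 <= j)%N -> tl a j <= r ^+ j / (1 - r).
Proof.
move=> j1; rewrite /tl; apply: limr_le; first exact: cvgP (tail_sum_cvg j1).
near=> N; have [Nj|jN] := leqP N j.
  by rewrite big_geq // divr_ge0 ?exprn_ge0 ?subr_ge0 ?ltW.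
rewrite -(subnK (ltnW jN)) addnC.
apply: (@le_trans _ _ (\sum_(j <= i < j + (N - j)) r ^+ i)).
  by apply: ler_sum_nat => i /andP[ji _]; apply: a_le_rX; exact: leq_trans j1 ji.
rewrite geometric_partial_tail geometric_seriesE ?lt_eqF //=.
rewrite ler_wpM2r ?invr_ge0 ?subr_ge0 ?(ltW r_lt1) //.
by rewrite mulrBr mulr1 gerBl mulr_ge0 // exprn_ge0 // ltW.
Unshelve. all: by end_near.
Qed.

Let K := 2 + (1 - r)^-1 `^ k.

Let K_ge2 : 2 <= K.
Proof. by rewrite lerDl powR_ge0. Qed.

Lemma powR_tl_le {j} : (1 <= j)%N -> tl a j `^ k <= K * 2 ^- j.
Proof.
move=> j1; have r1 : 0 <= (1 - r)^-1 by rewrite invr_ge0 subr_ge0 ltW.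
apply: (le_trans (powRk_le (ltW (tl_gt0 j1)) (tl_le_geometric j1))).
rewrite powRM ?exprn_ge0 ?(ltW r_gt0) // powRXn ?(ltW r_gt0) // powRk_r exprVn mulrC.
by rewrite ler_wpM2r // lerDr.
Qed.

Lemma powR_le_theta {u} : 0 <= u <= 1 -> u `^ k <= K * theta a u.
Proof.
move=> hu; have [->|u0] := eqVneq u 0; first by rewrite powRk0 theta0 mulr0.
have hu' := gt0_in01 hu u0; have [d1 /andP[_ hi]] := digitP hu'.
have /andP[u_ge0 _] := hu.
apply: le_trans (powRk_le u_ge0 hi) (le_trans (powR_tl_le d1) _).
rewrite ler_wpM2l ?(le_trans _ K_ge2) // -subr_ge0 (theta_block_bottom hu').
apply: mulr_ge0; first exact/ltW/pow2V_gt0.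
by rewrite subr_ge0; case/andP: (theta_in01 (Lalpha_in01 hu')).
Qed.

Lemma theta_block_top_ge {x} : 0 < x <= 1 ->
  (tl a (d x) - x) `^ k <= K * (2 * 2 ^- (d x) - theta a x).
Proof.
move=> hx; have hL := Lalpha_in01 hx; have /andP[L0 _] := hL; have d1 := digit_ge1 hx.
rewrite (theta_block_top hx) -(LalphaM hx) powRM ?(ltW (a_gt0 d1)) // mulrC mulrCA.
apply: ler_pM; [exact: powR_ge0 | exact: powR_ge0 | exact: powRk_le_pow2V |].
exact: powR_le_theta.
Qed.

Lemma powR_le_one_sub_theta {v} : 0 <= v <= 1 -> (1 - v) `^ k <= K * (1 - theta a v).
Proof.
move=> hv; have [->|v0] := eqVneq v 0.
  by rewrite theta0 !subr0 powR1 mulr1 (le_trans _ K_ge2) // ler1n.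
have hv' := gt0_in01 hv v0; have [dv1 /andP[_ hi]] := digitP hv'.
case: (ltngtP (d v) 1) => [|dv2|dv_eq1].
- by rewrite ltnS leqn0 => /eqP dv0; rewrite dv0 in dv1.
- have theta_le_half : theta a v <= 2^-1.
    apply: (@le_trans _ _ (2 * 2 ^- (d v))).
      rewrite -subr_ge0 (theta_block_top hv'); apply: mulr_ge0; first exact/ltW/pow2V_gt0.
      by case/andP: (theta_in01 (Lalpha_in01 hv')).
    by rewrite -(prednK dv1) double_pow2VS pow2V_le_half // -ltnS prednK.
  have /andP[v_ge0 v_le1] := hv.
  have pow_le1 : (1 - v) `^ k <= 1.
    have := @powRk_le (1 - v) 1; rewrite powR1; apply; first by rewrite subr_ge0.
    by rewrite gerBl.
  apply: le_trans pow_le1 _; have := K_ge2; move: (theta a v) theta_le_half => t t_le K2.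
  have : 0 <= (K - 2) * (2^-1 - t) by apply: mulr_ge0; rewrite subr_ge0.
  have : (2 : R)^-1 * 2 = 1 by rewrite mulVf.
  lra.
- by have := theta_block_top_ge hv'; rewrite dv_eq1 tl1 expr1 divff.
Qed.

Lemma theta_block_bottom_ge {x} : 0 < x <= 1 ->
  (x - tl a (d x).+1) `^ k <= K * (theta a x - 2 ^- (d x)).
Proof.
move=> hx; have hL := Lalpha_in01 hx; have /andP[_ L1] := hL; have d1 := digit_ge1 hx.
rewrite (theta_block_bottom hx) (block_bottom_dist hx).
rewrite powRM ?subr_ge0 ?(ltW (a_gt0 d1)) // mulrC mulrCA.
apply: ler_pM; [exact: powR_ge0 | exact: powR_ge0 | exact: powRk_le_pow2V |].
exact: powR_le_one_sub_theta.
Qed.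

Lemma powR_tl_sub_le {m n} : (1 <= m)%N -> (m < n)%N ->
  (tl a m.+1 - tl a n) `^ k <= K * (2 ^- m - 2 * 2 ^- n).
Proof.
move=> m1; rewrite leq_eqVlt => /orP[/eqP <-|mn].
  by rewrite double_pow2VS !subrr powRk0 mulr0.
have tl_mn := tl_le (ltn0Sn m) (ltnW mn).
apply: le_trans (powRk_le (_ : 0 <= _ - _) (_ : _ <= tl a m.+1)) _.
- by rewrite subr_ge0.
- by rewrite gerBl ltW // tl_gt0 // (leq_trans _ mn).
apply: le_trans (powR_tl_le (ltn0Sn m)) _; rewrite ler_wpM2l ?(le_trans _ K_ge2) //.
have : 2 * 2 ^- n <= (2 : R) ^- m.+1 by rewrite -(double_pow2VS m.+1) ler_wpM2l // pow2V_le.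
rewrite -(double_pow2VS m); move: (2 ^- m.+1) (2 * 2 ^- n) => p q; lra.
Qed.

Let M := 3 `^ k * K.

Let K_le_M : K <= M.
Proof.
have : 1 <= 3 `^ k by have := @powRk_le 1 3; rewrite powR1; apply => //; rewrite ler1n.
move=> three_k; rewrite /M -[X in X <= _]mul1r; apply: ler_wpM2r => //.
exact: le_trans K_ge2.
Qed.

Let M_ge2 : 2 <= M.
Proof. exact: le_trans K_ge2 K_le_M. Qed.

Lemma dist_le_theta_lt_digit {x y} : 0 < x <= 1 -> 0 < y <= 1 -> (d y < d x)%N ->
  `|x - y| `^ k <= M * `|theta a x - theta a y|.
Proof.
move=> hx hy dyx; have [g1 g2 g3] := block_gaps_ge0 hx hy dyx.
rewrite (dist_lt_digit hx hy dyx).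
apply: le_trans (powR_add3_le (ltW k_gt0) g1 g2 g3) _.
rewrite (theta_dist_lt_digit hx hy dyx) /M -mulrA ler_wpM2l ?powR_ge0 // mulrDr mulrDr.
apply: lerD; first apply: lerD.
- exact: theta_block_bottom_ge.
- exact: powR_tl_sub_le (digit_ge1 hy) dyx.
- exact: theta_block_top_ge.
Qed.

Lemma dist_le_theta_approx N x y : 0 <= x <= 1 -> 0 <= y <= 1 ->
  `|x - y| `^ k <= M * `|theta a x - theta a y| + M * 2 ^- N.
Proof.
elim: N x y => [|N IH] x y hx hy.
  have /andP[x0 x1] := hx; have /andP[y0 y1] := hy.
  have : `|x - y| `^ k <= 1.
    have := @powRk_le `|x - y| 1; rewrite powR1; apply => //.
    by rewrite ler_norml; apply/andP; split; lra.
  have := normr_ge0 (theta a x - theta a y); rewrite expr0 invr1 mulr1.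
  have := M_ge2; move: (`|_ - _|) (`|_ - _| `^ k) => T W *.
  have : 0 <= M * T by apply: mulr_ge0 => //; exact: le_trans M_ge2.
  lra.
wlog xy : x y hx hy / x <= y.
  move=> H; case: (leP x y) => [|/ltW] xy; first exact: H.
  by rewrite distrC (distrC (theta a x)); exact: H.
have e0 := pow2V_gt0 N; have M0 : 0 <= M by apply: le_trans M_ge2.
have [->|x0] := eqVneq x 0.
  have /andP[y0 _] := hy; have /andP[ty0 _] := theta_in01 hy.
  rewrite theta0 !sub0r !normrN ger0_norm // ger0_norm //.
  apply: le_trans (powR_le_theta hy) _; rewrite -[X in X <= _]addr0 lerD //.
    by rewrite ler_wpM2r.
  by rewrite mulr_ge0 // ltW // pow2V_gt0.
have hx' := gt0_in01 hx x0.
have hy' : 0 < y <= 1 by case/andP: hy => _ ->; rewrite (lt_le_trans _ xy) //; case/andP: hx'.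
have := digit_antitone hx' hy' xy; rewrite leq_eqVlt => /orP[/eqP dyx|dyx]; last first.
  apply: le_trans (dist_le_theta_lt_digit hx' hy' dyx) _.
  by rewrite lerDl mulr_ge0 // ltW // pow2V_gt0.
rewrite (theta_dist_same_digit hx' hy' (esym dyx)) (dist_same_digit hx' hy' (esym dyx)).
rewrite powRM ?normr_ge0 ?(ltW (a_gt0 (digit_ge1 hx'))) // pow2VS.
have := IH _ _ (Lalpha_in01 hx') (Lalpha_in01 hy').
have := powRk_le_pow2V (digit_ge1 hx'); have := pow2V_le_half (digit_ge1 hx').
have := powR_ge0 `|L x - L y| k; have := pow2V_gt0 (d x).
move: (2 ^- d x) (2 ^- N) (a (d x) `^ k) (`|L x - L y| `^ k) e0.
move: (`|theta a (L x) - _|) => T p e A W e0 p0 W0 p_half Ap IHW.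
have q1 : 0 <= W * (p - A) by apply: mulr_ge0; rewrite // subr_ge0.
have q2 : 0 <= p * (M * T + M * e - W) by apply: mulr_ge0; [exact: ltW | rewrite subr_ge0].
have q3 : 0 <= M * e * (2^-1 - p).
  by apply: mulr_ge0; [apply: mulr_ge0 => //; exact: ltW | rewrite subr_ge0].
have hh : (2 : R)^-1 * 2 = 1 by rewrite mulVf.
lra.
Qed.

Lemma theta_sub_holder : sub_holder_cont k (theta a).
Proof.
split=> //; exists M^-1; first by rewrite invr_gt0 (lt_le_trans _ M_ge2).
move=> x y hx hy; rewrite mulrC ler_pdivrMr ?(lt_le_trans _ M_ge2) // mulrC.
apply: (@le_add_pow2V _ _ M) => [|N]; first exact: le_trans M_ge2.
exact: dist_le_theta_approx.
Qed.

End SubHolder.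

End Luroth.

Theorem lemma2p3 (R : realType) (a : nat -> R) :
  is_alpha_partition a ->
  holder_cont (inf (kappa_set a)) (theta a) /\
  (has_ubound (kappa_set a) -> sub_holder_cont (sup (kappa_set a)) (theta a)).
Proof.
move=> Ha; split.
  apply: theta_holder => //; first exact: inf_kappa_ge0.
  by move=> n n1; apply: pow2V_le_powR => //; exact: inf_kappa_le.
move=> ub; apply: theta_sub_holder => //; first exact: sup_kappa_gt0.
by move=> n n1; apply: powR_le_pow2V => //; exact: kappa_le_sup.
Qed.
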